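(* (a) For every integer $B\ge1$ there is a deterministic exploration algorithm which, knowing only $B$ (and not $n$ or $k$), solves PVG-Exploration of every feasible anonymous PV graph (homogeneous or heterogeneous, with arbitrary routes) whose period satisfies $p\le B$, and in which the agent performs at most $(3k-2)B^2$ moves, where $k$ is the number of carriers. (b) For every integer $B\ge1$ there is a deterministic exploration algorithm which, knowing only $B$ and that the system is homogeneous, solves PVG-Exploration of every feasible anonymous homogeneous PV graph with period $p\le B$, performing at most $(3k-2)B$ moves.
   Context: A PV (periodically varying) system consists of a finite set $S$ of $n$ sites and a set $C$ of $k\le n$ carriers. Each carrier $c$ has a distinct identifier and a route $\pi(c)=\langle x_0,\dots,x_{p(c)-1}\rangle$, a finite sequence of sites (repetitions allowed) of length $p(c)\ge 1$ called its period; $\pi(c)[j]=x_{j \bmod p(c)}$. At each time $t\in\mathbb{N}$ carrier $c$ is at site $\pi(c)[t]$ and moves to $\pi(c)[t+1]$. The PV graph $\vec G_R$ is the directed edge-labelled multigraph on $S$ with edges $(x_i,x_{i+1},i)$, $0\le i<p(c)$, for every carrier. Its period is $p=\max_{c}p(c)$; it is homogeneous if all periods are equal, heterogeneous otherwise. In an anonymous system sites are indistinguishable to the agent. An exploring agent is injected at time $0$ at a site of $\mathrm{start}(\vec G_R)=\{\pi(c)[0]:c\in C\}$. If at time $t$ the agent is at site $x$, it must either choose a carrier $c$ with $\pi(c)[t]=x$ and ride with it to $\pi(c)[t+1]$ (one move), or halt and exit; it cannot wait at a site. At each time the agent observes only the identifiers of the carriers present at its current site. An exploration algorithm is a deterministic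 rule mapping the agent's a priori knowledge and history of observations to its next action. An algorithm solves PVG-Exploration of $\vec G_R$ if from every injection site the agent visits every site of $S$ and halts after finitely many moves. $\vec G_R$ is feasible if from the starting point of every carrier there exists a walk realizable by the agent (riding carriers and switching between carriers at the same site at the same time) visiting all sites. *)

From mathcomp Require Import all_boot.
Set Implicit Arguments. Unset Strict Implicit. Unset Printing Implicit Defensive.

(* Sites are the naturals 0..n-1.  A carrier is a pair (identifier, route);
   the route is a nonempty sequence of sites whose length is the period. *)
Definition carrier := (nat * seq nat)%type.
Definition cid (c : carrier) : nat := c.1.
Definition route (c : carrier) : seq nat := c.2.
Definition cperiod (c : carrier) : nat := size (route c).

Definition pos (c : carrier) (t : nat) : nat :=
  nth 0 (route c) (t %% cperiod c).

Definition pv_system (n : nat) (G : seq carrier) : bool :=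
  [&& uniq (map cid G),
      all (fun c => 0 < cperiod c) G,
      all (fun c => all (fun x => x < n) (route c)) G
    & size G <= n].

Definition period (G : seq carrier) : nat := \max_(c <- G) cperiod c.

Definition homogeneous (G : seq carrier) : bool :=
  all (fun c => all (fun d => cperiod c == cperiod d) G) G.

Definition start (G : seq carrier) : seq nat := [seq pos c 0 | c <- G].

Fixpoint valid_walk (G : seq carrier) (x t : nat) (cs : seq carrier) : bool :=
  match cs with
  | [::] => true
  | c :: cs' => [&& c \in G, pos c t == x & valid_walk G (pos c t.+1) t.+1 cs']
  end.

Fixpoint walk_sites (x t : nat) (cs : seq carrier) : seq nat :=
  match cs with
  | [::] => [:: x]
  | c :: cs' => x :: walk_sites (pos c t.+1) t.+1 cs'
  end.

Definition feasible (n : nat) (G : seq carrier) : Prop :=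
  forall c, c \in G -> exists cs : seq carrier,
    valid_walk G (pos c 0) 0 cs /\
    forall y, y < n -> y \in walk_sites (pos c 0) 0 cs.

(* Anonymous observation: the (sorted) identifiers of carriers at site x at time t *)
Definition obs (G : seq carrier) (t x : nat) : seq nat :=
  sort leq [seq cid c | c <- G & pos c t == x].

(* An exploration algorithm: maps the history of observations (including the
   current one) to an action: Some i = ride carrier with identifier i,
   None = halt. *)
Definition algorithm := seq (seq nat) -> option nat.

Definition carrier_of (G : seq carrier) (i : nat) : carrier :=
  nth (0, [::]) G (index i (map cid G)).

(* Returns Some (visited sites) if the
   agent halts after at most [fuel] moves having always chosen a carrier present
   at its current site; None otherwise (too many moves or invalid choice). *)
Fixpoint run (A : algorithm) (G : seq carrier) (x t : nat)
    (h : seq (seq nat)) (fuel : nat) : option (seq nat) :=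
  let o := obs G t x in
  let h' := rcons h o in
  match A h' with
  | None => Some [:: x]
  | Some i =>
      match fuel with
      | 0 => None
      | f.+1 =>
          if i \in o then
            match run A G (pos (carrier_of G i) t.+1) t.+1 h' f with
            | Some v => Some (x :: v)
            | None => None
            end
          else None
      end
  end.

Definition explores_within (A : algorithm) (n : nat) (G : seq carrier) (M : nat) : Prop :=
  forall x0, x0 \in start G ->
    exists v, run A G x0 0 [::] M = Some v /\ forall y, y < n -> y \in v.

(* Two carriers "meet" when they are at the same site at the same time.  If
   any two carriers have a common period q <= W (q = p(c)p(d) <= B^2 in
   general, q = p <= B in the homogeneous case), then every meeting of two
   carriers recurs in every window of W consecutive time steps.  The
   algorithm, knowing only W, performs a DFS on the meeting graph of the
   carriers: it rides a newly reached carrier for W steps, noting every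
   identifier it sees; it then rides the carrier on top of its stack until an
   unvisited noted carrier shows up and switches to it, or, when none is left,
   rides until the parent carrier shows up and switches back.  Each of the k
   explorations costs W moves, each of the <= k-1 switches forward and back
   costs <= W moves, whence (3k-2)W moves.  Feasibility ensures that every site
   lies on the route of a carrier connected to the starting one, and the
   exploration phase of that carrier passes through all its positions. *)
From mathcomp Require Import all_boot zify.
Set Implicit Arguments. Unset Strict Implicit. Unset Printing Implicit Defensive.

(* The agent.  [Explore r]: r more steps on the current carrier, recording
   observations; [Decide]: inspect the top of the stack; [Seek d]: ride until
   carrier d is present; [Return p]: ride until the parent p is present. *)
Inductive mode := Start | Explore of nat | Decide | Seek of nat | Return of nat.

(* [stack] holds, for each carrier of the current DFS branch, the identifiers
   observed while exploring it (its candidate neighbours). *)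
Record agent_state := AgentState {
  smode : mode; current : nat; visited : seq nat; stack : seq (nat * seq nat) }.

Definition explore_step (r : nat) (s : agent_state) (o : seq nat) :=
  (AgentState (if r is r'.+2 then Explore r'.+1 else Decide) (current s) (visited s)
     (if stack s is (c, p) :: rest then (c, o ++ p) :: rest else [::]),
   Some (current s)).

Definition decide (s : agent_state) : agent_state * option nat :=
  match stack s with
  | (c, pend) :: rest =>
     match [seq d <- pend | d \notin visited s] with
     | d :: _ => (AgentState (Seek d) c (visited s) (stack s), Some c)
     | [::] => match rest with
               | (p, _) :: _ => (AgentState (Return p) c (visited s) rest, Some c)
               | [::] => (s, None) end end
  | [::] => (s, None) end.

Definition transition (W : nat) (s : agent_state) (o : seq nat) :=
  match smode s with
  | Start => if o is i :: _ then
               explore_step W (AgentState Decide i [:: i] [:: (i, [::])]) o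
             else (s, None)
  | Explore r => explore_step r s o
  | Decide => decide s
  | Seek d => if d \in o then
                explore_step W (AgentState Decide d (d :: visited s) ((d, [::]) :: stack s)) o
              else (s, Some (current s))
  | Return p => if p \in o then decide (AgentState Decide p (visited s) (stack s))
                else (s, Some (current s))
  end.

Definition init_state := AgentState Start 0 [::] [::].

Definition state_after (W : nat) (h : seq (seq nat)) :=
  foldl (fun so o => transition W so.1 o) (init_state, None) h.

Definition dfs_algorithm (W : nat) : algorithm := fun h => (state_after W h).2.

(* Execution of the state machine directly, without replaying the history. *)
Fixpoint exec (W : nat) (G : seq carrier) (s : agent_state) (x t fuel : nat) :=
  let o := obs G t x in
  match transition W s o with
  | (_, None) => Some [:: x]
  | (s', Some i) =>
      match fuel with
      | 0 => None
      | f.+1 =>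
          if i \in o then
            if exec W G s' (pos (carrier_of G i) t.+1) t.+1 f is Some v
            then Some (x :: v) else None
          else None
      end
  end.

Lemma run_exec W G f h x t :
  run (dfs_algorithm W) G x t h f = exec W G (state_after W h).1 x t f.
Proof.
elim: f h x t => [|f IH] h x t /=; rewrite /dfs_algorithm /state_after foldl_rcons /=;
  case E: (transition W _ _) => [s' [i|]] //=.
case: ifP => // _.
by rewrite IH /state_after foldl_rcons E.
Qed.

(* Budget accounting: a switch (seek or return) costs m + 1 <= W moves, an
   exploration W moves. *)
Lemma budget_seek W a b F m : 0 < a -> m < W -> W * (3 * a + b - 1) <= F.+1 ->
  [/\ m <= F, W <= F - m & W * (3 * a.-1 + b.+1 - 1) <= F - m - W].
Proof. by move=> *; split; nia. Qed.

Lemma budget_return W a b F m : 1 < b -> m < W -> W * (3 * a + b - 1) <= F.+1 ->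
  m <= F /\ W * (3 * a + b.-1 - 1) <= F - m.
Proof. by move=> *; split; nia. Qed.

Section DFS.
Variable W : nat.
Variable G : seq carrier.
Hypothesis W_gt0 : 0 < W.
Hypothesis cid_uniq : uniq (map cid G).
Hypothesis joint_period : forall c d, c \in G -> d \in G -> exists2 q, 0 < q <= W &
  forall u, pos c (u + q) = pos c u /\ pos d (u + q) = pos d u.

Local Notation ids := (map cid G).
Local Notation car := (carrier_of G).

Lemma cid_inj c d : c \in G -> d \in G -> cid c = cid d -> c = d.
Proof.
move: cid_uniq; elim: G => //= x s IH /andP[nx us].
rewrite !inE => /predU1P[->|cs] /predU1P[->|ds] e //.
- by move: nx; rewrite e (map_f cid ds).
- by move: nx; rewrite -e (map_f cid cs).
- exact: IH.
Qed.

Lemma carrier_of_cid c : c \in G -> car (cid c) = c.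
Proof.
move=> cG; have im : cid c \in ids by apply: map_f.
have lt : index (cid c) ids < size G by rewrite -(size_map cid) index_mem.
apply: cid_inj => //; first exact: mem_nth.
by rewrite -(nth_map _ 0) // nth_index.
Qed.

Lemma carrier_of_id i : i \in ids -> car i \in G /\ cid (car i) = i.
Proof. by case/mapP=> c cG ->; rewrite carrier_of_cid. Qed.

Lemma mem_obs i t x : (i \in obs G t x) = (i \in ids) && (pos (car i) t == x).
Proof.
rewrite /obs mem_sort; apply/mapP/andP.
- case=> c; rewrite mem_filter => /andP[/eqP px cG] ->.
  by rewrite carrier_of_cid // map_f // px.
- case=> ii /eqP px; exists (car i); last by case: (carrier_of_id ii).
  by rewrite mem_filter px eqxx; case: (carrier_of_id ii).
Qed.

Definition meet i j := exists u, pos (car i) u = pos (car j) u.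

Lemma meet_sym i j : meet i j -> meet j i.
Proof. by case=> u e; exists u. Qed.

Lemma joint_window c d u t : c \in G -> d \in G ->
  exists2 m, m < W & pos c u = pos c (t + m) /\ pos d u = pos d (t + m).
Proof.
move=> cG dG; case: (joint_period cG dG) => q /andP[q_gt0 qW] hq.
have shift a k : pos c (a + k * q) = pos c a /\ pos d (a + k * q) = pos d a.
  elim: k => [|k [IH1 IH2]]; first by rewrite mul0n addn0.
  by rewrite mulSn (addnC q) addnA; case: (hq (a + k * q)) => -> ->.
have ts : t <= u + t * q by nia.
exists ((u + t * q - t) %% q); first by apply: leq_trans qW; rewrite ltn_mod.
have e : u + t * q = t + (u + t * q - t) %% q + (u + t * q - t) %/ q * q.
  by rewrite -addnA (addnC (_ %% q)) -divn_eq subnKC.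
case: (shift u t) => <- <-.
by case: (shift (t + (u + t * q - t) %% q) ((u + t * q - t) %/ q)) => <- <-; rewrite -e.
Qed.

Lemma meet_in_window i j t : i \in ids -> j \in ids -> meet i j ->
  exists2 m, m < W & pos (car j) (t + m) = pos (car i) (t + m).
Proof.
move=> ii jj [u e]; case: (carrier_of_id ii) => iG _; case: (carrier_of_id jj) => jG _.
case: (joint_window u t iG jG) => m mW [e1 e2]; exists m => //.
by rewrite -e1 -e2 e.
Qed.

Lemma route_in_window i t u : i \in ids ->
  exists2 m, m < W & pos (car i) u = pos (car i) (t + m).
Proof.
move=> ii; case: (carrier_of_id ii) => iG _.
by case: (joint_window u t iG iG) => m mW [e1 _]; exists m.
Qed.

Lemma first_meet c tau t : c \in ids -> tau \in ids -> meet c tau ->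
  exists2 m0, m0 < W & pos (car tau) (t + m0) = pos (car c) (t + m0) /\
    forall i, i < m0 -> pos (car tau) (t + i) != pos (car c) (t + i).
Proof.
move=> ci ti mct; case: (meet_in_window t ci ti mct) => m mW hm.
have ex : exists m, pos (car tau) (t + m) == pos (car c) (t + m) by exists m; rewrite hm.
case: (ex_minnP ex) => m0 /eqP h0 hmin; exists m0.
  by apply: leq_ltn_trans mW; apply: hmin; rewrite hm.
by split=> // i lt; apply/negP => /hmin; rewrite leqNgt lt.
Qed.

Definition meet_closed (V : seq nat) :=
  forall i, i \in V -> forall j, j \in ids -> meet i j -> j \in V.

(* The sites of a set of carriers are covered by [v], except those in [H]
   (sites already visited before the current position of the agent). *)
Definition covers (V : seq nat) (H : nat -> Prop) (v : seq nat) :=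
  forall i, i \in V -> forall u, H (pos (car i) u) \/ pos (car i) u \in v.

Definition halts_covering (V0 : seq nat) s x t F H := exists v,
  exec W G s x t F = Some v /\
  exists Vf : seq nat, [/\ {subset V0 <= Vf}, {subset Vf <= ids}, meet_closed Vf
                         & covers Vf H v].

Lemma halts_covering_weaken V0 V0' s x t F (H1 H2 : nat -> Prop) :
  (forall y, H1 y -> H2 y) -> {subset V0' <= V0} ->
  halts_covering V0 s x t F H1 -> halts_covering V0' s x t F H2.
Proof.
move=> hH hV [v [e [Vf [s1 s2 s3 s4]]]]; exists v; split=> //; exists Vf; split=> //.
- by move=> i /hV /s1.
- by move=> i /s4 h u; case: (h u) => [/hH|]; [left|right].
Qed.

Lemma halts_covering_step V0 s s' x t F H i :
  transition W s (obs G t x) = (s', Some i) -> i \in obs G t x ->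
  halts_covering V0 s' (pos (car i) t.+1) t.+1 F (fun y => H y \/ y = x) ->
  halts_covering V0 s x t F.+1 H.
Proof.
move=> e io [v [e' [Vf [s1 s2 s3 s4]]]]; exists (x :: v); split.
  by rewrite /= e io e'.
exists Vf; split=> // j /s4 h u; case: (h u) => [[|->]|]; first by left.
  by right; rewrite inE eqxx.
by move=> hv; right; rewrite inE hv orbT.
Qed.

Lemma covered_after_wait V0 s c tau : current s = c -> c \in ids -> tau \in ids ->
  (forall o, tau \notin o -> transition W s o = (s, Some c)) ->
  forall m t F H, (forall i, i < m -> pos (car tau) (t + i) != pos (car c) (t + i)) ->
  halts_covering V0 s (pos (car c) (t + m)) (t + m) F H ->
  halts_covering V0 s (pos (car c) t) t (F + m) H.
Proof.
move=> sc ci ti hs; elim=> [|m IH] t F H hne hC; first by move: hC; rewrite !addn0.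
have h0 := hne 0 (ltn0Sn m); rewrite addn0 in h0.
rewrite addnS; apply: (halts_covering_step (s' := s) (i := c)).
- by apply: hs; rewrite mem_obs ti.
- by rewrite mem_obs ci eqxx.
apply: (halts_covering_weaken (V0 := V0) (H1 := H)); [by move=> y; left | by [] |].
apply: IH; last by rewrite addSnnS.
by move=> i lt; rewrite addSnnS; apply: hne.
Qed.

Fixpoint gather d t r pend :=
  if r is r'.+1 then gather d t.+1 r' (obs G t (pos (car d) t) ++ pend) else pend.

Lemma mem_gather d t r pend j : j \in gather d t r pend ->
  j \in pend \/ exists2 m, m < r & j \in obs G (t + m) (pos (car d) (t + m)).
Proof.
elim: r t pend => [|r IH] t pend /=; first by left.
case/IH => [|[m mr hm]]; last by right; exists m.+1 => //; rewrite -addSnnS.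
rewrite mem_cat => /orP[h|]; last by left.
by right; exists 0 => //; rewrite addn0.
Qed.

Lemma gather_mem d t r pend j m : m < r ->
  j \in obs G (t + m) (pos (car d) (t + m)) -> j \in gather d t r pend.
Proof.
have keep t' r' p j' : j' \in p -> j' \in gather d t' r' p.
  elim: r' t' p => [|r' IH] t' p //= h.
  by apply: IH; rewrite mem_cat h orbT.
elim: r t m pend => [//|r IH] t [|m] pend /= lt h.
  by apply: keep; rewrite mem_cat -(addn0 t) h.
by apply: IH lt _; rewrite addSnnS.
Qed.

Lemma covered_after_explore V0 d rest vis : d \in ids -> forall r, 0 < r ->
  forall s s1 t pend F H,
  transition W s (obs G t (pos (car d) t)) = explore_step r s1 (obs G t (pos (car d) t)) ->
  current s1 = d -> visited s1 = vis -> stack s1 = (d, pend) :: rest ->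
  halts_covering V0 (AgentState Decide d vis ((d, gather d t r pend) :: rest))
    (pos (car d) (t + r)) (t + r) F
    (fun y => H y \/ exists2 m, m < r & y = pos (car d) (t + m)) ->
  halts_covering V0 s (pos (car d) t) t (F + r) H.
Proof.
move=> di; elim=> [//|r IH] _ s s1 t pend F H hs hc hv hk hC.
rewrite addnS; move: hs; rewrite /explore_step hc hv hk => hs.
apply: (halts_covering_step hs); first by rewrite mem_obs di eqxx.
clear hs; case: r IH hC => [|r] IH hC /=.
  move: hC; rewrite addn0 addn1 /=; apply: halts_covering_weaken => // y [h|[m]].
    by left.
  by case: m => // _ ->; right; rewrite addn0.
apply: (IH _ _ (AgentState (Explore r.+1) d vis
                  ((d, obs G t (pos (car d) t) ++ pend) :: rest))) => //.
rewrite addSnnS; move: hC; apply: halts_covering_weaken => // y [h|[[|m] lt ->]].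
- by left; left.
- by left; right; rewrite addn0.
- by right; exists m => //; rewrite addSnnS.
Qed.

(* Consecutive carriers of the DFS stack meet (so the agent can go back). *)
Fixpoint stack_chain (stk : seq (nat * seq nat)) : Prop :=
  match stk with
  | (c, _) :: (((p, _) :: _) as rest) => meet c p /\ stack_chain rest
  | _ => True
  end.

Record dfs_inv (s : agent_state) (H : nat -> Prop) : Prop := DfsInv {
  vis_uniq : uniq (visited s);
  vis_ids : {subset visited s <= ids};
  stack_top : exists pend rest, stack s = (current s, pend) :: rest;
  stack_vis : {subset map fst (stack s) <= visited s};
  stack_uniq : uniq (map fst (stack s));
  stack_meet : stack_chain (stack s);
  pend_sound : forall c pend, (c, pend) \in stack s ->
    forall j, j \in pend -> j \in ids /\ meet c j;
  pend_complete : forall c pend, (c, pend) \in stack s ->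
    forall j, j \in ids -> meet c j -> j \in pend;
  vis_finished : forall i, i \in visited s -> i \notin map fst (stack s) ->
    forall j, j \in ids -> meet i j -> j \in visited s;
  vis_covered : forall i, i \in visited s -> forall u, H (pos (car i) u) }.

Lemma gather_sound d t : d \in ids ->
  forall j, j \in gather d t W [::] -> j \in ids /\ meet d j.
Proof.
move=> di j /mem_gather [//|[m mW]]; rewrite mem_obs => /andP[jj /eqP e].
by split=> //; exists (t + m).
Qed.

Lemma gather_complete d t : d \in ids ->
  forall j, j \in ids -> meet d j -> j \in gather d t W [::].
Proof.
move=> di j jj mdj; case: (meet_in_window t di jj mdj) => m mW e.
by apply: (@gather_mem d t W [::] j m mW); rewrite mem_obs jj e eqxx.
Qed.

(* [dfs_measure] decreases at each decision (a seek visits a new carrier, a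
   return pops the stack); [dfs_budget] is the number of moves still allowed
   from a decision: 3W for each unexplored carrier (seek, exploration,
   return) and W for the return of each carrier on the stack but the root. *)
Definition dfs_measure (s : agent_state) :=
  2 * (size G - size (visited s)) + size (stack s).

Definition dfs_budget (s : agent_state) :=
  W * (3 * (size G - size (visited s)) + size (stack s) - 1).

Definition decide_correct_upto N := forall s s1 t F H,
  dfs_measure s1 <= N -> dfs_inv s1 H ->
  transition W s (obs G t (pos (car (current s1)) t)) = decide s1 ->
  dfs_budget s1 <= F ->
  halts_covering (visited s1) s (pos (car (current s1)) t) t F H.

(* Halting case: the root has no unvisited neighbour, so the visited set is
   meet-closed. *)
Lemma decide_halt s s' md c vis pend t F H :
  dfs_inv (AgentState md c vis [:: (c, pend)]) H ->
  (forall j, j \in pend -> j \in vis) ->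
  transition W s (obs G t (pos (car c) t)) = (s', None) ->
  halts_covering vis s (pos (car c) t) t F H.
Proof.
move=> hI fe hs; exists [:: pos (car c) t]; split; first by case: F => [|F]; rewrite /= hs.
exists vis; split => //; first exact: (vis_ids hI).
- move=> i iv j jj; case: (eqVneq i c) => [-> mcj|ne mij].
    exact/fe/(pend_complete hI (mem_head _ _)).
  by apply: (vis_finished hI iv) => //=; rewrite inE.
- by move=> i iv u; left; apply: (vis_covered hI).
Qed.

(* Return case: pop c, wait for the parent p (< W steps), switch to it. *)
Lemma decide_return N s md c p pp rest vis pend t F H :
  decide_correct_upto N ->
  dfs_measure (AgentState md c vis ((c, pend) :: (p, pp) :: rest)) <= N.+1 ->
  dfs_inv (AgentState md c vis ((c, pend) :: (p, pp) :: rest)) H ->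
  (forall j, j \in pend -> j \in vis) ->
  transition W s (obs G t (pos (car c) t)) =
    (AgentState (Return p) c vis ((p, pp) :: rest), Some c) ->
  dfs_budget (AgentState md c vis ((c, pend) :: (p, pp) :: rest)) <= F ->
  halts_covering vis s (pos (car c) t) t F H.
Proof.
move=> IH hN hI fe hs hF.
have ci : c \in ids by apply/(vis_ids hI)/(stack_vis hI); rewrite /= inE eqxx.
have pi : p \in ids by apply/(vis_ids hI)/(stack_vis hI); rewrite /= !inE eqxx orbT.
have mcp : meet c p by case: (stack_meet hI).
move: hF; rewrite /dfs_budget /= => hF.
have [F' eF] : exists F', F = F'.+1 by case: F hF => [|F]; [nia | exists F].
subst F.
apply: (halts_covering_step hs); first by rewrite mem_obs ci eqxx.
case: (first_meet t.+1 ci pi mcp) => m0 m0W [hm0 hlt].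
case: (budget_return (a := size G - size vis) (b := (size rest).+2) (F := F') isT m0W hF)
  => le1 le2.
rewrite -(subnK le1).
apply: (covered_after_wait (tau := p) (c := c)) => //.
  by move=> o /negbTE po; rewrite /transition /= po.
rewrite -hm0.
apply: (IH _ (AgentState Decide p vis ((p, pp) :: rest))) => /=.
- by move: hN; rewrite /dfs_measure /=; lia.
- apply: DfsInv => /=.
  + exact: (vis_uniq hI).
  + exact: (vis_ids hI).
  + by exists pp, rest.
  + by move=> i ii; apply: (stack_vis hI); rewrite /= inE ii orbT.
  + by case/andP: (stack_uniq hI).
  + by case: (stack_meet hI).
  + by move=> c' pd hin; apply: (pend_sound hI); rewrite inE hin orbT.
  + by move=> c' pd hin; apply: (pend_complete hI); rewrite inE hin orbT.
  + move=> i iv ni j jj; case: (eqVneq i c) => [-> mcj|ne mij].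
      exact/fe/(pend_complete hI (mem_head _ _)).
    by apply: (vis_finished hI iv) => //=; rewrite inE (negbTE ne).
  + by move=> i iv u; left; apply: (vis_covered hI).
- by rewrite /transition /= mem_obs pi eqxx.
- exact: le2.
Qed.

(* Seek case: wait for the unvisited neighbour d (< W steps), switch to it,
   explore it for W steps and push it on the stack. *)
Lemma decide_seek N s md c d rest vis pend t F H :
  decide_correct_upto N ->
  dfs_measure (AgentState md c vis ((c, pend) :: rest)) <= N.+1 ->
  dfs_inv (AgentState md c vis ((c, pend) :: rest)) H ->
  d \in pend -> d \notin vis ->
  transition W s (obs G t (pos (car c) t)) =
    (AgentState (Seek d) c vis ((c, pend) :: rest), Some c) ->
  dfs_budget (AgentState md c vis ((c, pend) :: rest)) <= F ->
  halts_covering vis s (pos (car c) t) t F H.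
Proof.
move=> IH hN hI dp dnv hs hF.
have ci : c \in ids by apply/(vis_ids hI)/(stack_vis hI); rewrite /= inE eqxx.
case: (pend_sound hI (mem_head _ _) dp) => di mcd.
have vis_lt : size vis < size G.
  have u : uniq (d :: vis) by rewrite /= dnv (vis_uniq hI).
  have sub : {subset d :: vis <= ids}.
    by move=> i; rewrite inE => /predU1P[->//|]; apply: (vis_ids hI).
  by move: (uniq_leq_size u sub); rewrite size_map.
have apos : 0 < size G - size vis by rewrite subn_gt0.
move: hF; rewrite /dfs_budget /= => hF.
have [F' eF] : exists F', F = F'.+1 by case: F hF => [|F]; [nia | exists F].
subst F.
apply: (halts_covering_step hs); first by rewrite mem_obs ci eqxx.
case: (first_meet t.+1 ci di mcd) => m0 m0W [hm0 hlt].
case: (budget_seek (a := size G - size vis) (b := (size rest).+1) (F := F') apos m0W hF)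
  => le1 le2 le3.
rewrite -(subnK le1).
apply: (covered_after_wait (tau := d) (c := c)) => //.
  by move=> o /negbTE po; rewrite /transition /= po.
rewrite -hm0.
apply: (halts_covering_weaken (V0 := d :: vis) (H1 := fun y => H y \/ y = pos (car c) t)) => //.
  by move=> i iv; rewrite inE iv orbT.
rewrite -(subnK le2); set t' := t.+1 + m0.
apply: (@covered_after_explore (d :: vis) d ((c, pend) :: rest) (d :: vis) di W W_gt0 _
   (AgentState Decide d (d :: vis) ((d, [::]) :: (c, pend) :: rest)) t' [::]) => //.
  by rewrite /transition /= mem_obs di eqxx.
apply: (IH _ (AgentState Decide d (d :: vis) ((d, gather d t' W [::]) :: (c, pend) :: rest))).
- by move: hN; rewrite /dfs_measure /=; lia.
- apply: DfsInv => /=.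
  + by rewrite dnv (vis_uniq hI).
  + by move=> i; rewrite inE => /predU1P[->//|]; apply: (vis_ids hI).
  + by exists (gather d t' W [::]), ((c, pend) :: rest).
  + move=> i; rewrite inE => /predU1P[->|ii]; first by rewrite inE eqxx.
    by rewrite inE (stack_vis hI ii) orbT.
  + apply/andP; split; last exact: (stack_uniq hI).
    by apply/negP => /(stack_vis hI); rewrite (negbTE dnv).
  + by split; [apply: meet_sym | exact: (stack_meet hI)].
  + move=> c' pd; rewrite inE => /predU1P[[-> ->]|hin]; last exact: (pend_sound hI hin).
    exact: gather_sound.
  + move=> c' pd; rewrite inE => /predU1P[[-> ->]|hin]; last exact: (pend_complete hI hin).
    exact: gather_complete.
  + move=> i; rewrite inE => /predU1P[->|iv] ni; first by rewrite inE eqxx in ni.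
    move: ni; rewrite inE negb_or => /andP[_ ni] j jj mij.
    by rewrite inE (vis_finished hI iv ni jj mij) orbT.
  + move=> i; rewrite inE => /predU1P[->|iv] u.
      by case: (route_in_window t' u di) => m mW e; right; exists m.
    by left; left; apply: (vis_covered hI).
- by rewrite /transition.
- have e : size G - (size vis).+1 = (size G - size vis).-1 by rewrite subnS.
  by rewrite /dfs_budget /= e.
Qed.

Lemma decide_correct N : decide_correct_upto N.
Proof.
elim: N => [|N IH] s [md c vis stk] t F H /= hN hI hs hF;
  case: (stack_top hI) => /= pend [rest ek]; subst stk.
  by move: hN; rewrite /dfs_measure /= addnS.
move: hs; rewrite /decide /=.
case ef: [seq d <- pend | d \notin vis] => [|d l] hs.
  have fe j : j \in pend -> j \in vis.
    move=> jp; apply/negPn/negP => nj.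
    by have := mem_filter (fun d => d \notin vis) j pend; rewrite ef nj jp.
  case: rest hN hI hF hs => [|[p pp] rest] hN hI hF hs.
    exact: (decide_halt F hI fe hs).
  exact: (decide_return IH hN hI fe hs hF).
have : d \in [seq d <- pend | d \notin vis] by rewrite ef inE eqxx.
rewrite mem_filter => /andP[dnv dp].
exact: (decide_seek IH hN hI dp dnv hs hF).
Qed.

Lemma walk_within_closed (V v : seq nat) : meet_closed V -> {subset V <= ids} ->
  covers V (fun _ => False) v ->
  forall cs x t, valid_walk G x t cs -> (exists2 j, j \in V & pos (car j) t = x) ->
  forall y, y \in walk_sites x t cs -> y \in v.
Proof.
move=> cl sids cov; elim=> [|c cs IH] x t /=.
  by move=> _ [j jV <-] y; rewrite inE => /eqP ->; case: (cov j jV t).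
case/and3P=> cG /eqP pc vw [j jV pj] y; rewrite inE => /predU1P[->|yw].
  by rewrite -pj; case: (cov j jV t).
apply: (IH _ _ vw) yw; exists (cid c); last by rewrite carrier_of_cid.
apply: (cl j jV); first exact: map_f.
by exists t; rewrite carrier_of_cid // pc pj.
Qed.

Lemma dfs_explores n x0 : x0 \in start G -> feasible n G ->
  exists v, exec W G init_state x0 0 ((3 * size G - 2) * W) = Some v /\
            forall y, y < n -> y \in v.
Proof.
case/mapP=> c0 c0G ex0 hfeas.
have : cid c0 \in obs G 0 x0 by rewrite mem_obs map_f // carrier_of_cid // ex0 eqxx.
case Eo: (obs G 0 x0) => [//|i l] _.
have : i \in obs G 0 x0 by rewrite Eo inE eqxx.
rewrite mem_obs => /andP[ii /eqP px].
have k_gt0 : 0 < size G by case: (G) c0G.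
have budget : (3 * size G - 2) * W = W * (3 * (size G - 1) + 1 - 1) + W by nia.
have [v [ev [Vf [sub sids cl cov]]]] :
    halts_covering [:: i] init_state (pos (car i) 0) 0 ((3 * size G - 2) * W) (fun _ => False).
  rewrite budget.
  apply: (@covered_after_explore [:: i] i [::] [:: i] ii W W_gt0 init_state
     (AgentState Decide i [:: i] [:: (i, [::])]) 0 [::]) => //.
    by rewrite /transition px Eo.
  apply: (@decide_correct (2 * size G + 1) _ (AgentState Decide i [:: i] [:: (i, gather i 0 W [::])])).
  - by rewrite /dfs_measure /=; lia.
  - apply: DfsInv => //=.
    + by move=> j; rewrite inE => /eqP ->.
    + by exists (gather i 0 W [::]), [::].
    + by move=> c' pd; rewrite inE => /eqP [-> ->]; apply: gather_sound.
    + by move=> c' pd; rewrite inE => /eqP [-> ->]; apply: gather_complete.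
    + by move=> j jv nj; rewrite jv in nj.
    + move=> j; rewrite inE => /eqP -> u.
      by case: (route_in_window 0 u ii) => m mW e; right; exists m.
  - by [].
  - by [].
exists v; split; first by rewrite -px.
move=> y yn; case: (hfeas _ (carrier_of_id ii).1) => cs [vw hw].
apply: (walk_within_closed cl sids _ vw) (hw y yn).
  by move=> j /cov h u; case: (h u) => [[]|]; right.
by exists i; [apply: sub; rewrite inE eqxx|].
Qed.

End DFS.

Lemma pos_period c u k : pos c (u + k * cperiod c) = pos c u.
Proof. by rewrite /pos addnC modnMDl. Qed.

Lemma cperiod_le G B c : period G <= B -> c \in G -> cperiod c <= B.
Proof. by move=> hp cG; apply: leq_trans hp; apply: (leq_bigmax_seq _ cG). Qed.

Lemma joint_period_general G B : all (fun c => 0 < cperiod c) G -> period G <= B ->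
  forall c d, c \in G -> d \in G -> exists2 q, 0 < q <= B ^ 2 &
    forall u, pos c (u + q) = pos c u /\ pos d (u + q) = pos d u.
Proof.
move=> hp hper c d cG dG; exists (cperiod c * cperiod d).
  rewrite muln_gt0 (allP hp c cG) (allP hp d dG) /= (expnS B 1) expn1.
  by apply: leq_mul; apply: (cperiod_le hper).
by move=> u; split; [rewrite mulnC|]; rewrite pos_period.
Qed.

Lemma joint_period_homogeneous G B : all (fun c => 0 < cperiod c) G -> homogeneous G ->
  period G <= B -> forall c d, c \in G -> d \in G -> exists2 q, 0 < q <= B &
    forall u, pos c (u + q) = pos c u /\ pos d (u + q) = pos d u.
Proof.
move=> hp hhom hper c d cG dG; exists (cperiod c).
  by rewrite (allP hp c cG) /=; apply: (cperiod_le hper).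
have e : cperiod c = cperiod d by apply/eqP; apply: (allP (allP hhom c cG) d dG).
move=> u; split; first by rewrite -(mul1n (cperiod c)) pos_period.
by rewrite e -(mul1n (cperiod d)) pos_period.
Qed.

Theorem mainTheorem9 :
  (forall B : nat, 1 <= B ->
     exists A : algorithm,
       forall (n : nat) (G : seq carrier),
         pv_system n G -> feasible n G -> period G <= B ->
         explores_within A n G ((3 * size G - 2) * B ^ 2))
  /\
  (forall B : nat, 1 <= B ->
     exists A : algorithm,
       forall (n : nat) (G : seq carrier),
         pv_system n G -> homogeneous G -> feasible n G -> period G <= B ->
         explores_within A n G ((3 * size G - 2) * B)).
Proof.
split=> B B_gt0.
- exists (dfs_algorithm (B ^ 2)) => n G /and4P[hu hp _ _] hfe hper x0 hx0.
  rewrite run_exec; apply: dfs_explores => //; first by rewrite expn_gt0 B_gt0.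
  exact: joint_period_general.
- exists (dfs_algorithm B) => n G /and4P[hu hp _ _] hhom hfe hper x0 hx0.
  rewrite run_exec; apply: dfs_explores => //.
  exact: joint_period_homogeneous.
Qed.
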